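(* Let $H$ be a bipartite graph with vertex classes $A_1$, $A_2$, where $|A_1|=n_1$, $|A_2|=n_2$, every vertex of $A_1$ has degree $d_1$ and every vertex of $A_2$ has degree $d_2$. Suppose that $d_2 \ge \log(2n_2)$. Then $H$ contains a subgraph which is a union of vertex-disjoint stars with centers in $A_1$, each star having at least $\frac{d_1}{4 \log (2n_2)}$ leaves, such that every vertex of $A_2$ is a leaf of one of these stars.
   Context: Here $\log$ denotes the natural logarithm. *)

From HB Require Import structures.
From mathcomp Require Import all_boot all_order all_algebra.
From mathcomp Require Import all_classical all_reals all_analysis.
Set Implicit Arguments. Unset Strict Implicit. Unset Printing Implicit Defensive.
Import Order.TTheory GRing.Theory Num.Theory.
Local Open Scope ring_scope.

(* A spanning-on-A2 union of
   vertex-disjoint stars with centres in A1 is encoded by the map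
   f : T2 -> T1 sending each vertex of A2 to the centre of the star in which
   it is a leaf: the star centred at a has leaf set f^-1(a), its edges
   {f b, b} must be edges of H, and stars are vertex-disjoint since f is a
   function and centres/leaves lie in different classes. *)
Definition star_cover (R : realType) (T1 T2 : finType)
  (E : T1 -> T2 -> bool) (k : R) (f : T2 -> T1) : Prop :=
  (forall b : T2, E (f b) b) /\
  (forall a : T1, (exists b : T2, f b = a) ->
     k <= (#|[set b : T2 | f b == a]|)%:R).

From HB Require Import structures.
From mathcomp Require Import all_boot all_order all_algebra.
From mathcomp Require Import all_classical all_reals all_analysis.
From mathcomp Require Import zify ring lra.
Import Order.TTheory GRing.Theory Num.Theory.
(* Give the finite-set lemmas precedence over their classical_sets homonyms. *)
Import mathcomp.boot.fintype mathcomp.boot.finset.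

Set Implicit Arguments. Unset Strict Implicit. Unset Printing Implicit Defensive.

(* Pick each vertex of A1 independently with probability p = log(2 n2) / d2.
   A first-moment bound on the test function 0^X + e^X / e^(4 log(2 n2)) of each
   degree X into the chosen set shows that for some choice S every vertex of A2
   has between 1 and 4 log(2 n2) neighbours in S.  A minimal U included in S that
   still dominates A2 gives every u in U a private neighbour, so double counting
   shows |N(P)| >= ceil(d1 / D) |P| for every P included in U, where D <= 4 log(2 n2)
   bounds the degrees into U.  By Hall's theorem each u in U is matched to
   ceil(d1 / D) vertices of A2, disjointly; every other vertex of A2 joins the star
   of any of its neighbours in U. *)

Local Open Scope nat_scope.

Section HallMarriage.
Variables (X Y : finType) (r : X -> Y -> bool).
Implicit Types (A B : {set X}) (C : {set Y}) (g : X -> Y).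

Definition neighb (C : {set Y}) (B : {set X}) : {set Y} :=
  [set y in C | [exists x in B, r x y]].

Definition hall_cond (C : {set Y}) (A : {set X}) : Prop :=
  forall B : {set X}, B \subset A -> #|B| <= #|neighb C B|.

Definition matching (C : {set Y}) (A : {set X}) (g : X -> Y) : Prop :=
  {in A &, injective g} /\ {in A, forall x, r x (g x) && (g x \in C)}.

Lemma matching_neighb C A g : matching C A g -> matching (neighb C A) A g.
Proof.
case=> injg gP; split=> // x xA; have /andP[rxg gC] := gP x xA.
by rewrite rxg inE gC /=; apply/existsP; exists x; rewrite xA.
Qed.

Lemma matching_glue C1 C2 A1 A2 g1 g2 : [disjoint C1 & C2] ->
    matching C1 A1 g1 -> matching C2 A2 g2 ->
  matching (C1 :|: C2) (A1 :|: A2) (fun x => if x \in A1 then g1 x else g2 x).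
Proof.
move=> dC [inj1 P1] [inj2 P2].
have g1C x : x \in A1 -> g1 x \in C1 by case/P1/andP.
have g2C x : x \in A2 -> g2 x \in C2 by case/P2/andP.
have A2P x : x \in A1 :|: A2 -> x \notin A1 -> x \in A2.
  by rewrite inE => /orP[->|].
split=> [x y xA yA|x xA] /=.
  case: ifPn => [xA1|/(A2P x xA) xA2]; case: ifPn => [yA1|/(A2P y yA) yA2].
  - exact: inj1.
  - by move=> e; have := disjointFr dC (g1C x xA1); rewrite e g2C.
  - by move=> e; have := disjointFr dC (g1C y yA1); rewrite -e g2C.
  - exact: inj2.
case: ifPn => [/P1|/(A2P x xA)/P2] /andP[-> g]; by rewrite inE g ?orbT.
Qed.

Lemma hall_cond_tight C A B : hall_cond C A -> B \subset A ->
  #|neighb C B| = #|B| -> hall_cond (C :\: neighb C B) (A :\: B).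
Proof.
move=> hA sBA tB B' sB'.
have dB'B : [disjoint B' & B].
  by rewrite disjoints_subset (subset_trans sB') // setDE subsetIr.
have sN : neighb C (B :|: B') \subset neighb C B :|: neighb (C :\: neighb C B) B'.
  apply/subsetP => y; rewrite !inE => /andP[yC /existsP[x /andP[]]].
  rewrite yC /= inE => /orP[xB|xB'] rxy.
    by apply/orP; left; apply/existsP; exists x; rewrite xB.
  rewrite andbT orbC; case: (boolP [exists z in B, r z y]) => //= _.
  by rewrite orbF; apply/existsP; exists x; rewrite xB' rxy.
have sBB'A : B :|: B' \subset A by rewrite subUset sBA (subset_trans sB') ?subsetDl.
have := hA _ sBB'A.
have := cardsUI B B'; rewrite setIC (disjoint_setI0 dB'B) cards0.
have := subset_leq_card sN; have := cardsUI (neighb C B) (neighb (C :\: neighb C B) B').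
lia.
Qed.

Lemma hall_cond_loose C A x : x \in A ->
    (forall B, B \proper A -> 0 < #|B| -> #|B| < #|neighb C B|) ->
  forall y, hall_cond (C :\ y) (A :\ x).
Proof.
move=> xA loose y B sB; have [->|B_gt0] := posnP #|B|; first exact: leq0n.
have pBA : B \proper A.
  rewrite properE (subset_trans sB (subD1set A x)) /=.
  by apply/subsetPn; exists x => //; apply/negP => /(subsetP sB); rewrite !inE eqxx.
have sN : neighb C B \subset y |: neighb (C :\ y) B.
  by apply/subsetP => z; rewrite !inE => /andP[-> ->]; rewrite !andbT orbN.
have := subset_leq_card sN; rewrite cardsU1; have := loose B pBA B_gt0; lia.
Qed.

Theorem hall_marriage (y0 : Y) C A : hall_cond C A -> exists g, matching C A g.
Proof.
have [n] := ubnP #|A|; elim: n A C => // n IH A C ltAn hA.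
have [->|[x0 x0A]] := set_0Vmem A.
  by exists (fun=> y0); split=> x; rewrite inE.
have [/existsP[B /and3P[pBA B_gt0 /eqP tB]] | loose] := boolP [exists B : {set X},
    [&& B \proper A, 0 < #|B| & #|neighb C B| == #|B|]].
- have sBA := proper_sub pBA.
  have [g1 /matching_neighb m1] : exists g, matching C B g.
    apply: IH => [|B' sB']; first by have := proper_card pBA; lia.
    exact/hA/(subset_trans sB' sBA).
  have [g2 m2] : exists g, matching (C :\: neighb C B) (A :\: B) g.
    apply: IH; last exact: hall_cond_tight.
    by rewrite cardsD (setIidPr sBA); have := subset_leq_card sBA; lia.
  have sNC : neighb C B \subset C by apply/subsetP => y; rewrite inE => /andP[].
  have eA : B :|: A :\: B = A by rewrite -[RHS](setID A B) (setIidPr sBA).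
  have eC : neighb C B :|: C :\: neighb C B = C.
    by rewrite -[RHS](setID C (neighb C B)) (setIidPr sNC).
  exists (fun x => if x \in B then g1 x else g2 x); rewrite -eA -eC.
  by apply: matching_glue m1 m2; rewrite disjoint_sym disjoints_subset setDE subsetIr.
- have [y1] : exists y, y \in neighb C [set x0].
    by apply/card_gt0P; have := hA [set x0]; rewrite sub1set cards1; apply.
  rewrite !inE => /andP[y1C /existsP[_ /andP[/set1P-> rx0y1]]].
  have m1 : matching [set y1] [set x0] (fun=> y1).
    by split=> [x y /set1P-> /set1P-> //|x /set1P->]; rewrite rx0y1 inE eqxx.
  have [g2 m2] : exists g, matching (C :\ y1) (A :\ x0) g.
    apply: IH; last apply: (hall_cond_loose x0A) => B pBA B_gt0.
      by rewrite (cardsD1 x0 A) x0A in ltAn.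
    by rewrite ltn_neqAle hA ?proper_sub // andbT; apply: contraNneq loose => tB;
      apply/existsP; exists B; rewrite pBA B_gt0 tB /=.
  exists (fun x => if x \in [set x0] then y1 else g2 x).
  rewrite -(setD1K x0A) -(setD1K y1C).
  by apply: matching_glue m1 m2; rewrite disjoints1 !inE eqxx.
Qed.

End HallMarriage.

Lemma card_set_sum (T : finType) (p : pred T) : #|[set x | p x]| = \sum_x p x.
Proof. by rewrite -sum1_card big_mkcond; apply: eq_bigr => x _; rewrite inE; case: (p x). Qed.

Section Stars.
Variables (T1 T2 : finType) (E : T1 -> T2 -> bool).
Implicit Types (U P S : {set T1}).

Definition dominating U := [forall b, [exists a in U, E a b]].

Definition private_nbr U u b := [set a in U | E a b] == [set u].

Lemma sum_card_nbr_in d P : (forall a, #|[set b | E a b]| = d) ->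
  \sum_b #|[set a in P | E a b]| = d * #|P|.
Proof.
move=> regE; under eq_bigr do rewrite card_set_sum.
rewrite exchange_big /= mulnC -sum_nat_const [RHS]big_mkcond; apply: eq_bigr => a _.
by case: (a \in P) => /=; [rewrite -(regE a) card_set_sum | rewrite big1].
Qed.

Lemma private_nbr_sub U P u b : P \subset U -> u \in P ->
  private_nbr U u b -> [set a in P | E a b] = [set u].
Proof.
move=> sPU uP /eqP/setP privU; apply/setP => a; have := privU a; rewrite !inE.
case: (eqVneq a u) => [->|_]; first by rewrite uP (subsetP sPU u uP).
by case aP: (a \in P); rewrite //= (subsetP sPU a aP).
Qed.

Lemma card_le_private U P : P \subset U ->
    (forall u, u \in U -> exists b, private_nbr U u b) ->
  #|P| <= #|[set b | #|[set a in P | E a b]| == 1]|.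
Proof.
move=> sPU priv; have [->|[u0 u0P]] := set_0Vmem P; first by rewrite cards0.
have [b0 _] := priv u0 (subsetP sPU u0 u0P).
have /fin_all_exists[pr prP] u : exists b, (u \in U) ==> private_nbr U u b.
  by case: (boolP (u \in U)) => [/priv[b pb]|_]; [exists b | exists b0].
have prPP u : u \in P -> [set a in P | E a (pr u)] = [set u].
  by move=> uP; apply: (private_nbr_sub sPU uP); apply: (implyP (prP u)); apply: (subsetP sPU).
rewrite -(card_in_imset (f := pr)) => [|u v uP vP e]; last first.
  by apply/set1_inj; rewrite -prPP // e prPP.
by apply/subset_leq_card/subsetP => _ /imsetP[u uP ->]; rewrite inE prPP ?cards1.
Qed.

Lemma private_expansion d D U P :
    (forall a, #|[set b | E a b]| = d) ->
    (forall b, #|[set a in U | E a b]| <= D) -> 0 < D ->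
    (forall u, u \in U -> exists b, private_nbr U u b) -> P \subset U ->
  (d + D.-1) * #|P| <= D * #|neighb E [set: T2] P|.
Proof.
move=> regE degU D_gt0 priv sPU.
set deg := fun b => #|[set a in P | E a b]|.
set N := neighb E [set: T2] P; set Q := [set b | deg b == 1].
have degN b : (0 < deg b) = (b \in N).
  rewrite !inE; apply/card_gt0P/existsP => -[a]; rewrite ?inE => /andP[aP Eab];
    by exists a; rewrite ?inE aP.
have degD b : deg b <= D.
  by apply/(leq_trans _ (degU b))/subset_leq_card/subsetP => a;
    rewrite !inE => /andP[/(subsetP sPU) -> ->].
(* A vertex of [Q] is counted once on the left but [D] times on the right. *)
have : \sum_b deg b + \sum_(b in Q) D.-1 <= \sum_(b in N) D.
  rewrite [X in _ + X]big_mkcond [X in _ <= X]big_mkcond -big_split.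
  apply: leq_sum => b _; rewrite -degN inE; have := degD b.
  by case: (deg b) => [|[|k]] //=; lia.
rewrite (sum_card_nbr_in P regE) !sum_nat_const mulnDl.
have := card_le_private sPU priv; rewrite -/deg -/Q; nia.
Qed.

Lemma dominatingP U : reflect (forall b, exists2 a, a \in U & E a b) (dominating U).
Proof.
apply: (iffP forallP) => domU b.
  by have /existsP[a /andP[aU Eab]] := domU b; exists a.
by have [a aU Eab] := domU b; apply/existsP; exists a; rewrite aU.
Qed.

Lemma private_dominating_sub S : dominating S ->
  exists U, [/\ U \subset S, dominating U & forall u, u \in U -> exists b, private_nbr U u b].
Proof.
move=> domS.
case: (@arg_minnP _ S (fun V => (V \subset S) && dominating V) (fun V => #|V|)).
  by rewrite subxx.
move=> U /andP[sUS domU] minU; exists U; split=> // u uU.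
apply/existsP; apply: contraT => /existsPn nopriv.
suff /minU : (U :\ u \subset S) && dominating (U :\ u).
  by rewrite (cardsD1 u U) uU ltnn.
rewrite (subset_trans (subD1set U u) sUS); apply/dominatingP => b.
have [a aU Eab] := dominatingP _ domU b.
have [au|a_u] := eqVneq a u; last by exists a; rewrite ?inE ?a_u ?aU.
have : ~~ ([set a in U | E a b] \subset [set u]).
  by apply: contra (nopriv b) => sub; rewrite /private_nbr eqEsubset sub sub1set inE -au aU Eab.
by case/subsetPn => a'; rewrite !inE => /andP[a'U Ea'b] a'u; exists a'; rewrite ?inE ?a'U ?a'u.
Qed.

Lemma blowup_matching (b0 : T2) K U :
    (forall P, P \subset U -> K * #|P| <= #|neighb E [set: T2] P|) ->
  exists g, matching (fun x : T1 * 'I_K => E x.1) [set: T2] (setX U [set: 'I_K]) g.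
Proof.
move=> expand; apply: hall_marriage b0 _ _ _ => B sBU.
set P := [set x.1 | x in B].
have sPU : P \subset U.
  by apply/subsetP => y /imsetP[x /(subsetP sBU) + ->]; rewrite inE => /andP[].
have sB : B \subset setX P [set: 'I_K].
  by apply/subsetP => x xB; rewrite !inE andbT imset_f.
have sN : neighb E [set: T2] P \subset neighb (fun x : T1 * 'I_K => E x.1) [set: T2] B.
  apply/subsetP => b; rewrite !inE => /existsP[_ /andP[/imsetP[x xB ->] Exb]].
  by apply/existsP; exists x; rewrite xB.
apply: (leq_trans (subset_leq_card sB)); rewrite cardsX cardsT card_ord mulnC.
exact: leq_trans (expand P sPU) (subset_leq_card sN).
Qed.

Lemma star_cover_blowup (R : realType) K U g : dominating U ->
    matching (fun x : T1 * 'I_K => E x.1) [set: T2] (setX U [set: 'I_K]) g ->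
  exists f, star_cover E (K%:R : R)%R f.
Proof.
move=> /dominatingP domU [injg gP].
have domU' b : exists a, (a \in U) && E a b.
  by have [a aU Eab] := domU b; exists a; rewrite aU.
set UK := setX U [set: 'I_K].
pose f b := if [pick x in UK | g x == b] is Some x then x.1 else xchoose (domU' b).
have fP b : (f b \in U) && E (f b) b.
  rewrite /f; case: pickP => [x /andP[xUK /eqP <-]|_]; last exact: (xchooseP (domU' b)).
  by have /andP[-> _] := gP x xUK; move: xUK; rewrite inE => /andP[-> _].
have UK_ai a i : a \in U -> (a, i) \in UK by rewrite !inE => ->.
have f_g a i : a \in U -> f (g (a, i)) = a.
  move=> aU; rewrite /f; case: pickP => [x /andP[xUK /eqP e]|/(_ (a, i))].
    by rewrite (injg _ _ xUK (UK_ai a i aU) e).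
  by rewrite UK_ai ?eqxx.
exists f; split=> [b|a [b <-]]; first by case/andP: (fP b).
have fbU : f b \in U by case/andP: (fP b).
have inj_gi : injective (fun i => g (f b, i)).
  by move=> i j /(injg _ _ (UK_ai _ i fbU) (UK_ai _ j fbU)) [].
rewrite ler_nat -{1}[K]card_ord -cardsT -(card_imset _ inj_gi).
by apply/subset_leq_card/subsetP => _ /imsetP[i _ ->]; rewrite inE f_g.
Qed.

Lemma star_cover_le (R : realType) (k k' : R) f :
  (k <= k')%R -> star_cover E k' f -> star_cover E k f.
Proof. by move=> le_kk' [Ef big]; split=> // a /big; apply: le_trans. Qed.

Lemma star_cover_card0 (R : realType) (k : R) : #|T2| = 0 -> exists f, star_cover E k f.
Proof.
move=> /card0_eq T2_0; have T2_void (b : T2) : False by have := T2_0 b; rewrite !inE.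
by exists (fun b => match T2_void b with end); split=> [b|a [b _]]; case: (T2_void b).
Qed.

Lemma star_cover_private (R : realType) (b0 : T2) d D U :
    (forall a, #|[set b | E a b]| = d) -> dominating U ->
    (forall u, u \in U -> exists b, private_nbr U u b) ->
    (forall b, #|[set a in U | E a b]| <= D) -> 0 < D ->
  exists f, star_cover E (d%:R / D%:R : R)%R f.
Proof.
move=> regE domU privU degU D_gt0.
pose K := (d + D.-1) %/ D.
have KD : K * D <= d + D.-1 := leq_trunc_div _ _.
have d_le : d <= K * D by have := ltn_ceil (d + D.-1) D_gt0; rewrite -/K; lia.
have expandU P : P \subset U -> K * #|P| <= #|neighb E [set: T2] P|.
  move=> sPU; rewrite -(leq_pmul2l D_gt0) mulnA (mulnC D).
  apply: leq_trans (private_expansion regE degU D_gt0 privU sPU).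
  by rewrite leq_mul2r KD orbT.
have [g mg] := blowup_matching b0 expandU.
have [f coverK] := star_cover_blowup R domU mg.
exists f; apply: star_cover_le coverK.
by rewrite ler_pdivrMr ?ltr0n // -natrM ler_nat.
Qed.

End Stars.

Local Open Scope ring_scope.

Section ProductBernoulli.
Variables (R : comPzRingType) (T : finType) (p : R).

(* The probability of [g] when the [g a] are independent Bernoulli(p) variables. *)
Definition pweight (g : {ffun T -> bool}) : R := \prod_a (if g a then p else 1 - p).

Lemma sum_pweight_prod (h : T -> bool -> R) :
  \sum_g pweight g * \prod_a h a (g a) = \prod_a (p * h a true + (1 - p) * h a false).
Proof.
transitivity (\prod_a \sum_(x : bool) (if x then p else 1 - p) * h a x); last first.
  by apply: eq_bigr => a _; rewrite big_bool.
by rewrite bigA_distr_bigA; apply: eq_bigr => g _; rewrite -big_split.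
Qed.

Lemma sum_pweight : \sum_g pweight g = 1.
Proof.
have := sum_pweight_prod (fun _ _ => 1).
rewrite (eq_bigr pweight) => [->|g _]; last by rewrite big1_eq mulr1.
by rewrite big1 // => a _; rewrite !mulr1 addrC subrK.
Qed.

Lemma sum_pweight_exp (A : {set T}) (t : R) :
  \sum_g pweight g * t ^+ #|[set a in A | g a]| = (p * t + (1 - p)) ^+ #|A|.
Proof.
transitivity (\sum_g pweight g * \prod_a (if (a \in A) && g a then t else 1)).
  apply: eq_bigr => g _; rewrite -big_mkcond /=.
  by rewrite (eq_bigl (fun a => a \in [set a in A | g a])) ?prodr_const // => a; rewrite inE.
rewrite (sum_pweight_prod (fun a x => if (a \in A) && x then t else 1)).
rewrite -prodr_const [RHS]big_mkcond; apply: eq_bigr => a _.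
by case: (a \in A); rewrite /= ?mulr1 // addrC subrK.
Qed.

End ProductBernoulli.

Lemma pweight_ge0 (R : numDomainType) (T : finType) (p : R) (g : {ffun T -> bool}) :
  0 <= p <= 1 -> 0 <= pweight p g.
Proof. by case/andP=> p_ge0 p_le1; apply: prodr_ge0 => a _; case: (g a); rewrite ?subr_ge0. Qed.

Lemma exists_lt_of_mean_lt (R : realDomainType) (I : finType) (w F : I -> R) c :
    (forall i, 0 <= w i) -> \sum_i w i = 1 -> \sum_i w i * F i < c ->
  exists i, F i < c.
Proof.
move=> w_ge0 w_sum; case: (boolP [exists i, F i < c]) => [/existsP//|/existsPn Fge].
rewrite -[X in _ < X]mul1r -w_sum mulr_suml ltNge => /negP[].
by apply: ler_sum => i _; rewrite ler_wpM2l // leNgt Fge.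
Qed.

Section RealBounds.
Variable R : realType.

Lemma expR1_le3 : expR 1 <= 3 :> R.
Proof.
(* From [1 - 1/6 <= e^(-1/6)] we get [e^(1/6) <= 6/5], and [(6/5)^6 < 3]. *)
have h1 : 1 - 6^-1 <= expR (- 6^-1 : R) := expR_ge1Dx _.
have h0 : expR (6^-1 : R) * expR (- 6^-1) = 1 by rewrite -expRD subrr expR0.
have hx0 := expR_ge0 (6^-1 : R).
have h2 : expR (6^-1 : R) <= 6 / 5 by nra.
rewrite -[1 : R](@mulfV _ 6%:R) // expRM_natl.
apply: (@le_trans _ _ ((6 / 5) ^+ 6)); first by apply: lerXn2r; rewrite ?nnegrE //; lra.
rewrite !exprS expr0; lra.
Qed.

Lemma binomial_mgf_le (p t : R) d : 0 <= p <= 1 -> 0 <= t ->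
  (p * t + (1 - p)) ^+ d <= expR ((t - 1) * (d%:R * p)).
Proof.
move=> /andP[p_ge0 p_le1] t_ge0.
have -> : (t - 1) * (d%:R * p) = d%:R * (p * (t - 1)) by ring.
have -> : p * t + (1 - p) = 1 + p * (t - 1) by ring.
rewrite expRM_natl; apply: lerXn2r; rewrite ?nnegrE ?expR_ge0 ?expR_ge1Dx //; nra.
Qed.

(* [0 ^+ n] detects [n = 0] and [e ^+ n / e^c] exceeds 1 when [c < n]; the means
   of both terms are binomial moment generating functions. *)
Definition outlier_majorant (c : R) (n : nat) : R := 0 ^+ n + expR 1 ^+ n / expR c.

Lemma outlier_majorant_ge0 c n : 0 <= outlier_majorant c n.
Proof. by rewrite addr_ge0 ?divr_ge0 ?exprn_ge0 ?expR_ge0 // expr0n; case: (n == 0)%N. Qed.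

Lemma outlier_majorant_lt1 c n : outlier_majorant c n < 1 -> (0 < n)%N && (n%:R <= c).
Proof.
rewrite /outlier_majorant ltNge; apply: contraNT; rewrite negb_and -eqn0Ngt -ltNge.
case/orP=> [/eqP->|c_lt]; first by rewrite !expr0 lerDl mul1r invr_ge0 expR_ge0.
rewrite -expRM_natl mulr1 -expRB -[leLHS]add0r lerD ?exprn_ge0 //.
by rewrite -[leLHS]expR0 ler_expR subr_ge0 ltW.
Qed.

End RealBounds.

Lemma exists_sparse_dominating (R : realType) (T1 T2 : finType) (E : T1 -> T2 -> bool)
    (n2 d2 : nat) : #|T2| = n2 -> (0 < n2)%N ->
    (forall b, #|[set a | E a b]| = d2) -> ln (2 * n2%:R : R) <= d2%:R ->
  exists2 S, dominating E S &
    forall b, #|[set a in S | E a b]|%:R <= 4 * ln (2 * n2%:R : R).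
Proof.
move=> cardT2 n2_gt0 regE L_le_d2.
set L := ln (2 * n2%:R : R); set x := (2 * n2%:R : R)^-1.
have n2_ge1 : (1 : R) <= n2%:R by rewrite ler1n.
have L_gt0 : 0 < L by apply: ln_gt0; lra.
have expNL : expR (- L) = x by rewrite expRN lnK // posrE; lra.
have d2_gt0 : (0 : R) < d2%:R by apply: lt_le_trans L_le_d2.
set p := L / d2%:R.
have p01 : 0 <= p <= 1.
  by rewrite /p divr_ge0 ?(ltW L_gt0) ?(ltW d2_gt0) //= ler_pdivrMr // mul1r.
have d2p : d2%:R * p = L by rewrite /p mulrC divfK // gt_eqF.
pose deg (g : {ffun T1 -> bool}) b := #|[set a in [set a | E a b] | g a]|.
pose F g := \sum_b outlier_majorant (4 * L) (deg g b).
have meanF : \sum_g pweight p g * F g =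
    \sum_(b : T2) ((p * 0 + (1 - p)) ^+ d2 + (p * expR 1 + (1 - p)) ^+ d2 / expR (4 * L)).
  under eq_bigr do rewrite mulr_sumr.
  rewrite exchange_big /=; apply: eq_bigr => b _.
  under eq_bigr do rewrite mulrDr mulrA.
  by rewrite big_split /= -mulr_suml !sum_pweight_exp regE.
have termB :
    (p * 0 + (1 - p)) ^+ d2 + (p * expR 1 + (1 - p)) ^+ d2 / expR (4 * L) <= x + x * x.
  apply: lerD.
    by apply: le_trans (binomial_mgf_le _ p01 (lexx 0)) _; rewrite sub0r mulN1r d2p expNL.
  rewrite ler_pdivrMr ?expR_gt0 //.
  apply: le_trans (binomial_mgf_le _ p01 (expR_ge0 1)) _; rewrite d2p.
  have -> : x * x * expR (4 * L) = expR (2 * L) by rewrite -expNL -!expRD; congr expR; lra.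
  by rewrite ler_expR ler_wpM2r ?(ltW L_gt0) //; have := @expR1_le3 R; lra.
have mean_lt1 : \sum_g pweight p g * F g < 1.
  rewrite meanF; apply: (le_lt_trans (ler_sum _ (fun b _ => termB))).
  rewrite sumr_const.
  have n2x : n2%:R * x = 2^-1 by rewrite /x invfM mulrCA mulfV ?mulr1 // gt_eqF //; lra.
  have x_le : x <= 2^-1 by rewrite /x lef_pV2 ?posrE; lra.
  by rewrite -mulr_natl mulrDr mulrA cardT2 n2x; lra.
have [g Fg_lt1] := exists_lt_of_mean_lt (fun g => pweight_ge0 g p01) (sum_pweight _ _) mean_lt1.
have degS b : #|[set a in [set a | g a] | E a b]| = deg g b.
  by apply: eq_card => a; rewrite !inE andbC.
have deg_ok b : (0 < deg g b)%N && ((deg g b)%:R <= 4 * L).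
  apply: outlier_majorant_lt1; apply: le_lt_trans Fg_lt1.
  by rewrite /F (bigD1 b) //= lerDl sumr_ge0 // => *; apply: outlier_majorant_ge0.
exists [set a | g a] => [|b]; last by rewrite degS; case/andP: (deg_ok b).
apply/dominatingP => b; have /andP[+ _] := deg_ok b; rewrite -degS.
by case/card_gt0P => a; rewrite !inE => /andP[ga Eab]; exists a; rewrite ?inE.
Qed.

Theorem lemma2p1 (R : realType) (T1 T2 : finType) (E : T1 -> T2 -> bool)
  (n1 n2 d1 d2 : nat) :
  #|T1| = n1 -> #|T2| = n2 ->
  (forall a : T1, #|[set b : T2 | E a b]| = d1) ->
  (forall b : T2, #|[set a : T1 | E a b]| = d2) ->
  ln (2 * n2%:R : R) <= d2%:R ->
  exists f : T2 -> T1,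
    star_cover E (d1%:R / (4 * ln (2 * n2%:R : R))) f.
Proof.
move=> _ cardT2 regE1 regE2 L_le_d2.
have [n2_0|n2_gt0] := posnP n2; first by apply: star_cover_card0; rewrite cardT2.
have T2_gt0 : (0 < #|T2|)%N by rewrite cardT2.
have /card_gt0P[b0 _] := T2_gt0.
have [S domS degS] := exists_sparse_dominating cardT2 n2_gt0 regE2 L_le_d2.
have [U [sUS domU privU]] := private_dominating_sub domS.
pose D := (\max_b #|[set a in U | E a b]|)%N.
have degU b : (#|[set a in U | E a b]| <= D)%N := leq_bigmax b.
have D_gt0 : (0 < D)%N.
  have [a aU Eab] := dominatingP _ _ domU b0.
  by apply: leq_trans (degU b0); apply/card_gt0P; exists a; rewrite inE aU.
have D_le : D%:R <= 4 * ln (2 * n2%:R : R).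
  rewrite /D; have [b ->] := bigop.eq_bigmax (fun b => #|[set a in U | E a b]|) T2_gt0.
  apply: le_trans (degS b); rewrite ler_nat subset_leq_card //.
  by apply/subsetP => a; rewrite !inE => /andP[/(subsetP sUS) -> ->].
have [f cover] := star_cover_private R b0 regE1 domU privU degU D_gt0.
exists f; apply: star_cover_le cover.
by rewrite ler_wpM2l // lef_pV2 ?posrE ?ltr0n // (lt_le_trans _ D_le) ?ltr0n.
Qed.
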